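(* Let $a,b,c\in\mathbb{Z}_8$. The unary operation $f(x)=ax^3+bx^2+cx$ on $\mathbb{Z}_8$ preserves the relation $Z$ if and only if both $a$ and $b$ are even.
   Context: $P_4$ is the power set of $\{1,2,3,4\}$. For $A\in P_4$, $\mathbf{g}^A\in\mathbb{Z}_8^{P_4}$ is the tuple with $B$-component $1$ if $A\subseteq B$ and $0$ otherwise. Every $\mathbf{u}\in\mathbb{Z}_8^{P_4}$ has a unique expression $\mathbf{u}=\sum_{A\in P_4}a_A\mathbf{g}^A$ with $a_A\in\mathbb{Z}_8$. $Z\subseteq \mathbb{Z}_8^{P_4}$ consists of all $\mathbf{u}$ whose coefficients satisfy: (Z1) $a_{\{2\}}\equiv 2a_{\{1\}}\pmod 4$ and $a_{\{4\}}\equiv 2a_{\{3\}}\pmod 4$; (Z2) $a_A\equiv 0\pmod 2$ whenever $|A|\ge 2$; (Z3) $a_A\equiv 0\pmod 4$ whenever $|A|\ge 2$ and $A\cap\{2,4\}\neq\emptyset$; (Z4) $a_A=0$ whenever $\{2,4\}\subseteq A$. An operation preserves $Z$ if applying it componentwise to elements of $Z$ yields an element of $Z$. *)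

From HB Require Import structures.
From mathcomp Require Import all_boot all_order all_algebra.
Set Implicit Arguments. Unset Strict Implicit. Unset Printing Implicit Defensive.
Import GRing.Theory.
Local Open Scope ring_scope.

(* The ground set {1,2,3,4} is represented by 'I_4, with element k+1 <-> k.
   So 1 <-> 0, 2 <-> 1, 3 <-> 2, 4 <-> 3. *)
Definition P4 := {set 'I_4}.
Definition Z8 := 'Z_8.
Definition tup := {ffun P4 -> Z8}.

Definition e1 : 'I_4 := @Ordinal 4 0 isT.
Definition e2 : 'I_4 := @Ordinal 4 1 isT.
Definition e3 : 'I_4 := @Ordinal 4 2 isT.
Definition e4 : 'I_4 := @Ordinal 4 3 isT.

Definition gvec (A : P4) : tup := [ffun B : P4 => if A \subset B then 1 else 0].

Definition comb (a : {ffun P4 -> Z8}) : tup :=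
  [ffun B : P4 => \sum_(A : P4) a A * gvec A B].

(* congruences on Z_8 elements via their canonical representatives 0..7 *)
Definition coeffs_ok (a : {ffun P4 -> Z8}) : Prop :=
  (* Z1 *)
  ((a [set e2] : nat) %% 4 = (2 * (a [set e1] : nat)) %% 4)%N /\
  ((a [set e4] : nat) %% 4 = (2 * (a [set e3] : nat)) %% 4)%N /\
  (* Z2 *)
  (forall A : P4, (2 <= #|A|)%N -> (2 %| a A)%N) /\
  (* Z3 *)
  (forall A : P4, (2 <= #|A|)%N -> (e2 \in A) || (e4 \in A) -> (4 %| a A)%N) /\
  (* Z4 *)
  (forall A : P4, e2 \in A -> e4 \in A -> a A = 0).

Definition inZ (u : tup) : Prop :=
  exists a : {ffun P4 -> Z8}, u = comb a /\ coeffs_ok a.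

Definition preservesZ (f : Z8 -> Z8) : Prop :=
  forall u : tup, inZ u -> inZ [ffun B : P4 => f (u B)].

Definition cubic (a b c : Z8) (x : Z8) : Z8 := a * x ^+ 3 + b * x ^+ 2 + c * x.

From mathcomp Require Import all_boot all_order all_algebra ring.
Set Implicit Arguments. Unset Strict Implicit. Unset Printing Implicit Defensive.
Import GRing.Theory.
Local Open Scope ring_scope.

(* Z is a Z_8-submodule of Z_8^P4, so for even a and b it suffices that
   2 u^2 and 2 u^3 lie in Z whenever u does.  As 2 (x + 4 y)^k = 2 x^k in Z_8,
   2 u^k only depends on u modulo 4, and modulo 4 every u in Z agrees with
   al g^0 + be (g^{1} + 2 g^{2}) + ga (g^{3} + 2 g^{4}) + 2 de g^{1,3} for some
   al, be, ga, de in {0,..,3}: these 256 cases are checked by computation.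
   Conversely, f maps u = g^{1} + 2 g^{2}, whose components at 0, {1}, {2},
   {1,2} are 0, 1, 2, 3, to f(0) g^0 + (f(1) - f(0)) g^{1} + (f(2) - f(0)) g^{2}
   + (f(3) - f(2) - f(1) + f(0)) g^{1,2}; then (Z1) forces 4 (a + b) = 0 and
   (Z3) at {1,2} forces 4 a = 0. *)

Lemma Z8_char : 8%:R = 0 :> Z8.
Proof. exact: pchar_Zp. Qed.

Lemma natr_eq0_Z8 n : (8 %| n)%N -> n%:R = 0 :> Z8.
Proof. by move/dvdnP=> [k ->]; rewrite natrM Z8_char mulr0. Qed.

Lemma natr_divnK (d : nat) (x : Z8) : (d %| x)%N -> x = d%:R * (x %/ d)%:R.
Proof. by move=> dv; rewrite -natrM mulnC divnK // natr_Zp. Qed.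

Lemma dvd2P (x : Z8) : reflect (4 * x = 0) (2 %| x)%N.
Proof.
have -> : (2 %| x)%N = (4 * x == 0) by case: x => [[|[|[|[|[|[|[|[|]]]]]]]]].
exact: eqP.
Qed.

Lemma dvd4P (x : Z8) : reflect (2 * x = 0) (4 %| x)%N.
Proof.
have -> : (4 %| x)%N = (2 * x == 0) by case: x => [[|[|[|[|[|[|[|[|]]]]]]]]].
exact: eqP.
Qed.

Lemma eqmod4_Z8 (x y : Z8) : (y %% 4 == 2 * x %% 4)%N = (2 * y == 4 * x).
Proof.
by case: x => [[|[|[|[|[|[|[|[|]]]]]]]]] ?; case: y => [[|[|[|[|[|[|[|[|]]]]]]]]].
Qed.

Lemma subr_mod4 (x : Z8) : x - (x %% 4)%:R = 4 * (x %/ 4)%:R.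
Proof. by rewrite -{1}(natr_Zp x) {1}(divn_eq x 4) natrD natrM addrK mulrC. Qed.

Lemma mul2_exprD4 (x y : Z8) k : 2 * (x + 4 * y) ^+ k = 2 * x ^+ k.
Proof.
apply/eqP; rewrite -subr_eq0 -mulrBr subrXX addrAC subrr add0r !mulrA.
by rewrite -natrM Z8_char !mul0r.
Qed.

(* Finite sets do not reduce in the kernel (the enumeration of 'I_4 is blocked
   by opaque proofs), so computations go through the bijection P4 ~ bool^4. *)
Definition mask := (bool * bool * bool * bool)%type.

Definition mask_of (A : P4) : mask := (e1 \in A, e2 \in A, e3 \in A, e4 \in A).

Definition set_of_mask (x : mask) : P4 :=
  [set i : 'I_4 | nth false [:: x.1.1.1; x.1.1.2; x.1.2; x.2] i].

Lemma mask_ofK : cancel mask_of set_of_mask.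
Proof.
move=> A; apply/setP => -[[|[|[|[|//]]]] i4]; rewrite inE /=;
  by congr (_ \in A); apply: val_inj.
Qed.

Lemma set_of_maskK : cancel set_of_mask mask_of.
Proof. by case=> [[[? ?] ?] ?]; rewrite /mask_of !inE. Qed.

Lemma set1_mask :
  [/\ [set e1] = set_of_mask (true, false, false, false),
      [set e2] = set_of_mask (false, true, false, false),
      [set e3] = set_of_mask (false, false, true, false) &
      [set e4] = set_of_mask (false, false, false, true)].
Proof. by split; apply: (can_inj mask_ofK); rewrite set_of_maskK /mask_of !in_set1. Qed.

Definition masks : seq mask :=
  let bs := [:: true; false] in
  [seq (xyz, w) | xyz <- [seq (xy, z) | xy <- [seq (x, y) | x <- bs, y <- bs], z <- bs],
                  w <- bs].

Lemma mem_masks x : x \in masks.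
Proof. by case: x => [[[[] []] []] []]. Qed.

Definition msum (F : mask -> Z8) : Z8 := foldr (fun x s => F x + s) 0 masks.

Lemma eq_msum (F G : mask -> Z8) : F =1 G -> msum F = msum G.
Proof. by move=> eqFG; rewrite /msum; elim: masks => //= x s ->; rewrite eqFG. Qed.

Lemma sum_P4 (F : P4 -> Z8) : \sum_(A : P4) F A = msum (fun x => F (set_of_mask x)).
Proof.
rewrite (reindex set_of_mask); last first.
  by exists mask_of => x _; [exact: set_of_maskK | exact: mask_ofK].
have masks_enum : perm_eq (index_enum mask) masks.
  apply: uniq_perm; [exact: index_enum_uniq | by [] |].
  by move=> x; rewrite mem_index_enum mem_masks.
by rewrite (perm_big _ masks_enum) /msum /masks /= !big_cons big_nil.
Qed.

Definition mask_le (x y : mask) : bool :=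
  [&& x.1.1.1 ==> y.1.1.1, x.1.1.2 ==> y.1.1.2, x.1.2 ==> y.1.2 & x.2 ==> y.2].

Definition mask_card (x : mask) : nat := x.1.1.1 + x.1.1.2 + x.1.2 + x.2.

Lemma subset_set_of_mask x y : (set_of_mask x \subset set_of_mask y) = mask_le x y.
Proof.
apply/subsetP/idP => [sub | /and4P[/implyP le1 /implyP le2 /implyP le3 /implyP le4]].
  by apply/and4P; split; apply/implyP => xi;
    [move: (sub e1) | move: (sub e2) | move: (sub e3) | move: (sub e4)];
    rewrite !inE; apply.
by move=> -[[|[|[|[|//]]]] i4]; rewrite !inE /=; auto.
Qed.

Lemma card_set_of_mask x : #|set_of_mask x| = mask_card x.
Proof.
rewrite -sum1_card big_mkcond /= !big_ord_recl big_ord0 !inE.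
by case: x => [[[[] []] []] []].
Qed.

Lemma mask_card_of A : mask_card (mask_of A) = #|A|.
Proof. by rewrite -card_set_of_mask mask_ofK. Qed.

Definition mzeta (c : mask -> Z8) (z : mask) : Z8 :=
  msum (fun x => if mask_le x z then c x else 0).

Lemma comb_set_of_mask (a : {ffun P4 -> Z8}) z :
  comb a (set_of_mask z) = mzeta (fun x => a (set_of_mask x)) z.
Proof.
rewrite ffunE sum_P4; apply: eq_msum => x.
by rewrite /gvec ffunE subset_set_of_mask; case: mask_le; rewrite ?mulr1 ?mulr0.
Qed.

Lemma comb_mask (c : mask -> Z8) :
  comb [ffun A => c (mask_of A)] = [ffun B => mzeta c (mask_of B)].
Proof.
apply/ffunP => B; rewrite -[in LHS](mask_ofK B) comb_set_of_mask ffunE.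
by apply: eq_msum => x; rewrite ffunE set_of_maskK.
Qed.

Lemma comb_add (a b : {ffun P4 -> Z8}) : comb (a + b) = comb a + comb b.
Proof.
apply/ffunP => B; rewrite !ffunE -big_split.
by apply: eq_bigr => A _; rewrite ffunE mulrDl.
Qed.

Lemma comb_scale (k : Z8) (a : {ffun P4 -> Z8}) :
  comb [ffun A => k * a A] = [ffun B => k * comb a B].
Proof.
apply/ffunP => B; rewrite !ffunE mulr_sumr.
by apply: eq_bigr => A _; rewrite ffunE mulrA.
Qed.

Lemma coeffs_okE (a : {ffun P4 -> Z8}) : coeffs_ok a <->
  [/\ 2 * a [set e2] = 4 * a [set e1], 2 * a [set e4] = 4 * a [set e3],
      forall A : P4, (2 <= #|A|)%N -> 4 * a A = 0,
      forall A : P4, (2 <= #|A|)%N -> (e2 \in A) || (e4 \in A) -> 2 * a A = 0 &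
      forall A : P4, e2 \in A -> e4 \in A -> a A = 0].
Proof.
split=> [[/eqP Z12 [/eqP Z34 [Z2 [Z3 Z4]]]] | [Z12 Z34 Z2 Z3 Z4]].
  move: Z12 Z34; rewrite !eqmod4_Z8 => /eqP Z12 /eqP Z34.
  by split=> // [A /Z2/dvd2P | A c2 /(Z3 _ c2)/dvd4P].
split; first by apply/eqP; rewrite eqmod4_Z8 Z12.
split; first by apply/eqP; rewrite eqmod4_Z8 Z34.
split; first by move=> A /Z2 Z2A; apply/dvd2P.
by split=> // A c2 /(Z3 _ c2) Z3A; apply/dvd4P.
Qed.

Lemma coeffs_ok_add (a b : {ffun P4 -> Z8}) :
  coeffs_ok a -> coeffs_ok b -> coeffs_ok (a + b).
Proof.
move=> /coeffs_okE[a12 a34 a2 a3 a4] /coeffs_okE[b12 b34 b2 b3 b4].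
apply/coeffs_okE; split=> [||A c2|A c2 e24|A e2A e4A]; rewrite !ffunE ?mulrDr.
- by rewrite a12 b12.
- by rewrite a34 b34.
- by rewrite a2 // b2 // addr0.
- by rewrite a3 // b3 // addr0.
- by rewrite a4 // b4 // addr0.
Qed.

Lemma coeffs_ok_scale (k : Z8) (a : {ffun P4 -> Z8}) :
  coeffs_ok a -> coeffs_ok [ffun A => k * a A].
Proof.
move=> /coeffs_okE[a12 a34 a2 a3 a4].
apply/coeffs_okE; split=> [||A c2|A c2 e24|A e2A e4A]; rewrite !ffunE.
- by rewrite mulrCA a12 mulrCA.
- by rewrite mulrCA a34 mulrCA.
- by rewrite mulrCA a2 // mulr0.
- by rewrite mulrCA a3 // mulr0.
- by rewrite a4 // mulr0.
Qed.

Lemma inZ_add (u v : tup) : inZ u -> inZ v -> inZ (u + v).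
Proof.
move=> [a [-> a_ok]] [b [-> b_ok]].
by exists (a + b); rewrite comb_add; split; last exact: coeffs_ok_add.
Qed.

Lemma inZ_scale (k : Z8) (u : tup) : inZ u -> inZ [ffun B => k * u B].
Proof.
move=> [a [-> a_ok]]; exists [ffun A => k * a A].
by rewrite comb_scale; split; last exact: coeffs_ok_scale.
Qed.

Definition mmoebius (h : mask -> Z8) (y : mask) : Z8 :=
  msum (fun x => if mask_le x y then (-1) ^+ (mask_card y - mask_card x) * h x else 0).

Definition mcoeffs_ok (c : mask -> Z8) : bool :=
  [&& (c (false, true, false, false) %% 4 == 2 * c (true, false, false, false) %% 4)%N,
      (c (false, false, false, true) %% 4 == 2 * c (false, false, true, false) %% 4)%N,
      all (fun x => (2 <= mask_card x)%N ==> (2 %| c x)%N) masks,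
      all (fun x => [&& 2 <= mask_card x & x.1.1.2 || x.2]%N ==> (4 %| c x)%N) masks &
      all (fun x => x.1.1.2 && x.2 ==> (c x == 0)) masks].

(* Memoisation, so that vm_compute evaluates h only once per mask. *)
Definition tabulate (h : mask -> Z8) : mask -> Z8 :=
  let t := [seq h x | x <- masks] in fun x => nth 0 t (index x masks).

(* The Moebius inversion of h is only a candidate coefficient family:
   whether it really expands to h is part of the check. *)
Definition certified (h : mask -> Z8) : bool :=
  let c := tabulate (mmoebius (tabulate h)) in
  all (fun z => mzeta c z == h z) masks && mcoeffs_ok c.

Lemma certifiedP (h : mask -> Z8) : certified h -> inZ [ffun B => h (mask_of B)].
Proof.
rewrite /certified; set c := tabulate _.
move=> /andP[/allP zetaE /and5P[c12 c34 /allP c2 /allP c3 /allP c4]].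
exists [ffun A => c (mask_of A)]; split.
  by rewrite comb_mask; apply/ffunP => B; rewrite !ffunE (eqP (zetaE _ (mem_masks _))).
rewrite /coeffs_ok !ffunE; have [-> -> -> ->] := set1_mask; rewrite !set_of_maskK.
split; first exact/eqP.
split; first exact/eqP.
split=> [A|]; first by rewrite ffunE -mask_card_of; apply/implyP/c2/mem_masks.
split=> [A c2A e24|A e2A e4A]; rewrite ffunE.
  by have /implyP := c3 _ (mem_masks (mask_of A)); rewrite mask_card_of c2A; apply.
by have /implyP/(_ _)/eqP := c4 _ (mem_masks (mask_of A)); apply; rewrite /= e2A e4A.
Qed.

Definition rep_coef (al be ga de : Z8) (x : mask) : Z8 :=
  match x with
  | (false, false, false, false) => al
  | (true, false, false, false) => be
  | (false, true, false, false) => 2 * be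
  | (false, false, true, false) => ga
  | (false, false, false, true) => 2 * ga
  | (true, false, true, false) => 2 * de
  | _ => 0
  end.

Definition rep (al be ga de : Z8) : mask -> Z8 := mzeta (rep_coef al be ga de).

Definition reps4 : seq Z8 := [:: 0; 1; 2; 3].

Lemma mod4_reps4 (x : Z8) : (x %% 4)%:R \in reps4.
Proof. by have := ltn_pmod x (isT : 0 < 4)%N; case: (_ %% 4)%N => [|[|[|[|]]]]. Qed.

Lemma coeffs_ok_mod4 (a : {ffun P4 -> Z8}) : coeffs_ok a ->
  exists al be ga de, [/\ al \in reps4, be \in reps4, ga \in reps4, de \in reps4 &
    forall x, 2 * (a (set_of_mask x) - rep_coef al be ga de x) = 0].
Proof.
move=> /coeffs_okE[a12 a34 a2 a3 _].
pose r (x : Z8) : Z8 := (x %% 4)%:R.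
have sub_mod4_0 x : 4 * (x - r x) = 0 /\ 2 * (x - r x) = 0.
  by rewrite subr_mod4 !mulrA -!natrM; split; apply: natr_eq0_Z8; rewrite dvdn_mulr.
have [de a13E] : exists de, a (set_of_mask (true, false, true, false)) = 2 * de.
  by eexists; apply: natr_divnK; apply/dvd2P; rewrite a2 ?card_set_of_mask.
have [s1 s2 s3 s4] := set1_mask; rewrite s1 s2 in a12; rewrite s3 s4 in a34.
exists (r (a (set_of_mask (false, false, false, false)))),
  (r (a (set_of_mask (true, false, false, false)))),
  (r (a (set_of_mask (false, false, true, false)))), (r de).
split=> [||||x]; try exact: mod4_reps4.
have a3_mask y : (1 < mask_card y)%N -> y.1.1.2 || y.2 -> 2 * a (set_of_mask y) = 0.
  by move=> c2 e24; apply: a3; rewrite ?card_set_of_mask ?inE.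
case: x => [[[[] []] []] []] /=; rewrite ?subr0 ?a3_mask //; try exact: (sub_mod4_0 _).2.
- by rewrite a13E -mulrBr mulrA -natrM; exact: (sub_mod4_0 _).1.
- by rewrite mulrBr a12 mulrA -natrM -mulrBr; exact: (sub_mod4_0 _).1.
- by rewrite mulrBr a34 mulrA -natrM -mulrBr; exact: (sub_mod4_0 _).1.
Qed.

Lemma inZ_rep_decomp (u : tup) : inZ u ->
  exists al be ga de, [/\ al \in reps4, be \in reps4, ga \in reps4, de \in reps4 &
    exists w : tup, forall B, u B = rep al be ga de (mask_of B) + 4 * w B].
Proof.
move=> [a [-> /coeffs_ok_mod4[al [be [ga [de [al4 be4 ga4 de4 a_mod4]]]]]]].
pose w : tup := [ffun A => ((a A - rep_coef al be ga de (mask_of A))%R %/ 4)%:R].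
have aE : a = [ffun A => rep_coef al be ga de (mask_of A)] + [ffun A => 4 * w A].
  apply/ffunP => A; rewrite !ffunE.
  have dv4 : (4 %| (a A - rep_coef al be ga de (mask_of A))%R)%N.
    by apply/dvd4P; rewrite -{1}(mask_ofK A) a_mod4.
  by rewrite -(natr_divnK dv4) addrC subrK.
exists al, be, ga, de; split=> //; exists (comb w) => B.
by rewrite aE comb_add comb_mask comb_scale !ffunE.
Qed.

Lemma reps_certified : all (fun k => all (fun al => all (fun be => all (fun ga =>
    all (fun de => certified (fun x => 2 * rep al be ga de x ^+ k)) reps4)
    reps4) reps4) reps4) [:: 2; 3].
Proof. by vm_compute. Qed.

Lemma inZ_mul2_exp (k : nat) (u : tup) :
  (k \in [:: 2; 3])%N -> inZ u -> inZ [ffun B => 2 * u B ^+ k].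
Proof.
move=> k23 /inZ_rep_decomp[al [be [ga [de [al4 be4 ga4 de4 [w uE]]]]]].
have -> : [ffun B => 2 * u B ^+ k] = [ffun B => 2 * rep al be ga de (mask_of B) ^+ k].
  by apply/ffunP => B; rewrite !ffunE uE mul2_exprD4.
apply: (@certifiedP (fun x => 2 * rep al be ga de x ^+ k)).
move: reps_certified => /allP/(_ k k23).
by move=> /allP/(_ al al4)/allP/(_ be be4)/allP/(_ ga ga4)/allP/(_ de de4).
Qed.

Lemma test_vector_inZ : inZ [ffun B => rep 0 1 0 0 (mask_of B)].
Proof. by apply: certifiedP; vm_compute. Qed.

Lemma test_vector_values :
  [/\ rep 0 1 0 0 (false, false, false, false) = 0, rep 0 1 0 0 (true, false, false, false) = 1,
      rep 0 1 0 0 (false, true, false, false) = 2 & rep 0 1 0 0 (true, true, false, false) = 3].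
Proof. by split; apply: val_inj. Qed.

Lemma preservesZ_even (a b c : Z8) :
  preservesZ (cubic a b c) -> (2 %| a)%N /\ (2 %| b)%N.
Proof.
move=> /(_ _ test_vector_inZ) [be [fuE /coeffs_okE[be12 _ _ be3 _]]].
have fE z : cubic a b c (rep 0 1 0 0 z) = mzeta (fun x => be (set_of_mask x)) z.
  by rewrite -comb_set_of_mask -fuE !ffunE set_of_maskK.
have [v0 v1 v2 v3] := test_vector_values.
have := fE (true, true, false, false); have := fE (false, true, false, false).
have := fE (true, false, false, false); have := fE (false, false, false, false).
rewrite v0 v1 v2 v3 /mzeta /msum /= !addr0 !add0r.
set b0 := be (set_of_mask (false, false, false, false)).
set b1 := be (set_of_mask (true, false, false, false)).
set b2 := be (set_of_mask (false, true, false, false)).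
set b12 := be (set_of_mask (true, true, false, false)).
move=> f0 f1 f2 f3.
have [s1 s2 _ _] := set1_mask; rewrite s1 s2 -/b1 -/b2 in be12.
have b12_0 : 2 * b12 = 0 by apply: be3; rewrite ?card_set_of_mask ?inE.
have a4 : 4 * a = 0.
  have -> : 4 * a = 2 * b12 - 8 * (4 * a + b).
    have -> : b12 = cubic a b c 3 - cubic a b c 2 - cubic a b c 1 + cubic a b c 0.
      by rewrite f3 f2 f1 f0; ring.
    by rewrite /cubic; ring.
  by rewrite b12_0 Z8_char mul0r subr0.
have b4 : 4 * b = 0.
  have -> : 4 * b = 2 * b2 - 4 * b1 - 4 * a - 8 * a.
    have -> : b1 = cubic a b c 1 - cubic a b c 0 by rewrite f1 f0 addrK.
    have -> : b2 = cubic a b c 2 - cubic a b c 0 by rewrite f2 f0 addrK.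
    by rewrite /cubic; ring.
  by rewrite be12 subrr a4 Z8_char mul0r !subr0.
by split; apply/dvd2P.
Qed.

Theorem lemma3p7 (a b c : Z8) :
  preservesZ (cubic a b c) <-> ((2 %| a)%N /\ (2 %| b)%N).
Proof.
split; first exact: preservesZ_even.
move=> [/natr_divnK -> /natr_divnK ->] u uZ.
set a' := (a %/ 2)%:R; set b' := (b %/ 2)%:R.
pose u3 := [ffun B => 2 * u B ^+ 3]; pose u2 := [ffun B => 2 * u B ^+ 2].
have -> : [ffun B => cubic (2%:R * a') (2%:R * b') c (u B)] =
    [ffun B => a' * u3 B] + [ffun B => b' * u2 B] + [ffun B => c * u B].
  by apply/ffunP => B; rewrite !ffunE /cubic; ring.
by apply: inZ_add; [apply: inZ_add|]; apply: inZ_scale => //; apply: inZ_mul2_exp uZ.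
Qed.
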